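(* Consider the decoding setting fixed in the context. Let $t_j=|\mathcal{A}_j|$ and run the index-collision-resolution procedure with $\hat t_j=t_j$, which terminates after $\tau$ iterations. Assume that (no $E_1$) $t_j\le T$, and that (no $E_2$) whenever, during this run, the decoder $D$ of $\mathcal{C}$ is applied to a vector of the form $[\mathbf{c}+\tilde{\mathbf{z}}_j/2^{\ell}]\bmod 2$ with $\mathbf{c}\in\mathcal{C}$ and $\ell$ a nonnegative integer, it outputs $\mathbf{c}$. Then for every $\ell\ge1$ (with $\ell\le\tau$), $\mathcal{U}(\mathcal{A}^{(\ell)}_j)=\bigcup_{\ell'=\ell}^{\tau}\mathcal{L}^{(\ell')}$.
   Context: Codes. Let $\mathbf{H}\in\{0,1\}^{m_p\times n_p}$ be a parity-check matrix of a binary linear code $\mathcal{C}_{\mathrm{aux}}$ of length $n_p$ with minimum Hamming distance $d$, and let $T=\lfloor (d-1)/2\rfloor$; denote the $u$-th column of $\mathbf{H}$ by $\mathbf{h}_u$. Let $\mathbf{G}\in\{0,1\}^{m_p\times n}$ be a generator matrix (full row rank) of a binary linear code $\mathcal{C}$ of length $n$ and dimension $m_p$. For $u\in\{1,\dots,n_p\}$ put $\mathbf{c}(u)=\mathbf{h}_u^T\mathbf{G}\bmod 2$ and define $\mathbf{x}(u)\in\mathbb{R}^n$ componentwise by $\mathbf{x}(u)_k=2a(\mathbf{c}(u)_k-1/2)$, where $a>0$ is fixed. Channel. In sub-block $j$, a finite set $\mathcal{A}_j$ of users transmits; user $i\in\mathcal{A}_j$ chose $u_i\in\{1,\dots,n_p\}$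 and sends $\mathbf{x}_{i,j}=\mathbf{x}(u_i)$. The received vector is $\mathbf{y}_j=\sum_{i\in\mathcal{A}_j}\mathbf{x}(u_i)+\mathbf{z}_j$ with noise $\mathbf{z}_j\in\mathbb{R}^n$; put $\tilde{\mathbf{z}}_j=\mathbf{z}_j/(2a)$. ''$\bmod 2$'' on real vectors is componentwise reduction into $[0,2)$. Basic decoder $\Phi$. For $\mathbf{y}\in\mathbb{R}^n$ and integer $\hat t\ge0$: form $\tilde{\mathbf{y}}=[\mathbf{y}/(2a)+\hat t/2]\bmod 2$; apply a decoder $D$ for $\mathcal{C}$, obtaining $\tilde{\mathbf{c}}\in\mathcal{C}$ (or a flagged error); recover the unique $\tilde{\mathbf{h}}$ with $\tilde{\mathbf{h}}^T\mathbf{G}=\tilde{\mathbf{c}}\bmod 2$; apply the bounded-distance syndrome decoder of $\mathcal{C}_{\mathrm{aux}}$, which returns the unique $S\subseteq\{1,\dots,n_p\}$ with $|S|\le T$ and $\sum_{u\in S}\mathbf{h}_u=\tilde{\mathbf{h}}\bmod 2$ if it exists and flags an error otherwise. $\Phi(\mathbf{y},\hat t)$ is the returned set (or $\emptyset$ with a flagged error). ICR procedure for an estimate $\hat t_j$: $\mathbf{y}^{(1)}_j=\mathbf{y}_j$, $\hat t^{(1)}_j=\hat t_j$, $\mathcal{L}^{(1)}=\Phi(\mathbf{y}^{(1)}_j,\hat t^{(1)}_j)$. For $\ell\ge1$: if $|\mathcal{L}^{(\ell)}|=\hat t^{(\ell)}_j$, stop with $\tau=\ell$ and return $\mathcal{L}^{(1)},\dots,\mathcal{L}^{(\tau)}$;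 if $|\mathcal{L}^{(\ell)}|>\hat t^{(\ell)}_j$, return an error; if $|\mathcal{L}^{(\ell)}|<\hat t^{(\ell)}_j$, set $\hat t^{(\ell+1)}_j=(\hat t^{(\ell)}_j-|\mathcal{L}^{(\ell)}|)/2$ (error if not an integer), $\mathbf{y}^{(\ell+1)}_j=(\mathbf{y}^{(\ell)}_j-\sum_{u\in\mathcal{L}^{(\ell)}}\mathbf{x}(u))/2$, $\mathcal{L}^{(\ell+1)}=\Phi(\mathbf{y}^{(\ell+1)}_j,\hat t^{(\ell+1)}_j)$, and continue. Auxiliary sets. For $u\in\{1,\dots,n_p\}$ let $\mathcal{A}^{(1)}_j(u)=\{i\in\mathcal{A}_j:u_i=u\}$. For $\ell\ge1$, let $\mathcal{B}^{(\ell)}_j(u)\subseteq\mathcal{A}^{(\ell)}_j(u)$ be an (arbitrary) subset with $|\mathcal{B}^{(\ell)}_j(u)|=2\lfloor|\mathcal{A}^{(\ell)}_j(u)|/2\rfloor$, and $\mathcal{A}^{(\ell+1)}_j(u)\subseteq\mathcal{B}^{(\ell)}_j(u)$ an (arbitrary) subset with $|\mathcal{A}^{(\ell+1)}_j(u)|=|\mathcal{B}^{(\ell)}_j(u)|/2$. Put $\mathcal{A}^{(\ell)}_j=\bigcup_u\mathcal{A}^{(\ell)}_j(u)$, $\mathcal{B}^{(\ell)}_j=\bigcup_u\mathcal{B}^{(\ell)}_j(u)$. For a set $\mathcal{S}$ of users, $\mathcal{U}(\mathcal{S})=\{u_i:i\in\mathcal{S}\}$. *)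

From HB Require Import structures.
From mathcomp Require Import all_boot all_order all_algebra.
From mathcomp Require Import reals.
Set Implicit Arguments. Unset Strict Implicit. Unset Printing Implicit Defensive.
Import Order.TTheory GRing.Theory Num.Theory.
Local Open Scope ring_scope.

Section Defs.
Variables (R : realType) (mp np n : nat).
Variables (H : 'M['F_2]_(mp, np)) (G : 'M['F_2]_(mp, n)).

Definition wt (m : nat) (v : 'cV['F_2]_m) : nat := #|[set i | v i 0 != 0]|.

Definition min_dist (d : nat) : Prop :=
  (exists v : 'cV['F_2]_np, [/\ v != 0, H *m v = 0 & wt v = d]) /\
  (forall v : 'cV['F_2]_np, v != 0 -> H *m v = 0 -> (d <= wt v)%N).

Definition bitR (b : 'F_2) : R := (b != 0)%:R.
Definition binR (c : 'rV['F_2]_n) : 'rV[R]_n := map_mx bitR c.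

Definition cw (u : 'I_np) : 'rV['F_2]_n := (col u H)^T *m G.

Definition xsig (a : R) (u : 'I_np) : 'rV[R]_n :=
  map_mx (fun b => 2 * a * (bitR b - 2^-1)) (cw u).

Definition mod2 (r : R) : R := r - 2 * (Num.floor (r / 2))%:~R.
Definition mod2v (v : 'rV[R]_n) : 'rV[R]_n := map_mx mod2 v.

(* bounded-distance syndrome decoder of C_aux: some (the unique, under the
   minimum-distance hypothesis) S with |S| <= T and sum_{u in S} h_u = h,
   or the empty set (error flagged) if none exists. *)
Definition synd_dec (T : nat) (h : 'cV['F_2]_mp) : {set 'I_np} :=
  odflt set0 [pick S : {set 'I_np} | (#|S| <= T)%N && (\sum_(u in S) col u H == h)].

Definition Phi_input (a : R) (y : 'rV[R]_n) (t : nat) : 'rV[R]_n :=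
  mod2v ((2 * a)^-1 *: y + const_mx (t%:R / 2)).

Definition Phi (a : R) (D : 'rV[R]_n -> option 'rV['F_2]_n) (T : nat)
  (y : 'rV[R]_n) (t : nat) : {set 'I_np} :=
  match D (Phi_input a y t) with
  | None => set0
  | Some c => synd_dec T (c *m pinvmx G)^T
  end.


(* ICR states (y^(l), t^(l)) for levels l >= 1 (level 0 = level 1, unused) *)
Fixpoint icr_state (a : R) (D : 'rV[R]_n -> option 'rV['F_2]_n) (T : nat)
  (y0 : 'rV[R]_n) (t0 : nat) (l : nat) : 'rV[R]_n * nat :=
  match l with
  | 0 => (y0, t0)
  | l'.+1 =>
    match l' with
    | 0 => (y0, t0)
    | _ => let st := icr_state a D T y0 t0 l' in
           let L := Phi a D T st.1 st.2 in
           (2^-1 *: (st.1 - \sum_(u in L) xsig a u), ((st.2 - #|L|) ./2)%N)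
    end
  end.

Definition icr_y a D T y0 t0 l := (icr_state a D T y0 t0 l).1.
Definition icr_t a D T y0 t0 l := (icr_state a D T y0 t0 l).2.
Definition icr_L a D T y0 t0 l :=
  Phi a D T (icr_y a D T y0 t0 l) (icr_t a D T y0 t0 l).

Definition icr_stops a D T y0 t0 (tau : nat) : Prop :=
  [/\ (1 <= tau)%N,
      forall l, (1 <= l < tau)%N ->
        (#|icr_L a D T y0 t0 l| < icr_t a D T y0 t0 l)%N /\
        ~~ odd (icr_t a D T y0 t0 l - #|icr_L a D T y0 t0 l|) &
      #|icr_L a D T y0 t0 tau| = icr_t a D T y0 t0 tau].

End Defs.

(* Let m_l(v) = |A^(l)(v)|, the number of users of index v still
   present at level l, so that m_(l+1)(v) = floor(m_l(v) / 2).  By induction on l,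
   the ICR state at level l is y^(l) = sum_v m_l(v) x(v) + z / 2^(l-1) together
   with t^(l) = sum_v m_l(v).  Adding t^(l)/2 and reducing mod 2 turns this real
   superposition of antipodal signals into [c + z~/2^(l-1)] mod 2, where c is the
   codeword of the syndrome sum_v m_l(v) h_v computed over F_2; so D returns c
   (no E_2), and since that syndrome is the sum of h_v over the at most T indices
   with m_l(v) odd, the syndrome decoder returns L^(l) = {v | m_l(v) odd}.  At the
   last level |L^(tau)| = t^(tau) forces m_tau <= 1, and a halving sequence that
   ends in {0, 1} is positive at level l iff it is odd at some level of [l, tau]. *)

From HB Require Import structures.
From mathcomp Require Import all_boot all_order all_algebra.
From mathcomp Require Import reals.
From mathcomp Require Import ring zify.
Import Order.TTheory GRing.Theory Num.Theory.
Local Open Scope ring_scope.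
Set Implicit Arguments. Unset Strict Implicit. Unset Printing Implicit Defensive.

Lemma odd_leq (k : nat) : (odd k <= k)%N.
Proof. by case: k => //= k; apply: leq_trans (leq_b1 _) _. Qed.

Lemma half_leq_self (k : nat) : (k./2 <= k)%N.
Proof. by rewrite leq_half_double -addnn (leq_trans (leq_addr k k)). Qed.

Lemma card_set_odd (I : finType) (m : I -> nat) :
  #|[set i | odd (m i)]| = (\sum_i odd (m i))%N.
Proof. by rewrite -sum1dep_card big_mkcond; apply: eq_bigr => i _; case: odd. Qed.

Lemma half_subn_sum_odd (I : finType) (m : I -> nat) :
  ((\sum_i m i - \sum_i odd (m i))./2 = \sum_i (m i)./2)%N.
Proof.
have -> : (\sum_i m i = \sum_i odd (m i) + (\sum_i (m i)./2).*2)%N.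
  rewrite -muln2 big_distrl -big_split; apply: eq_bigr => i _.
  by rewrite /= muln2 odd_double_half.
by rewrite addKn doubleK.
Qed.

Lemma sum_odd_eq_leq1 (I : finType) (m : I -> nat) :
  (\sum_i odd (m i))%N = (\sum_i m i)%N -> forall i, (m i <= 1)%N.
Proof.
move=> hsum i.
have /eqP : (\sum_i (m i - odd (m i)) = 0)%N.
  by rewrite sumnB ?hsum ?subnn // => j; rewrite odd_leq.
rewrite sum_nat_eq0 => /forallP /(_ i) /eqP /eqP; rewrite subn_eq0.
by move/leq_trans; apply; apply: leq_b1.
Qed.

Lemma halving_pos_has_odd (f : nat -> nat) (l K : nat) :
  (forall k, (l <= k)%N -> f k.+1 = (f k)./2) -> (f K <= 1)%N -> (l <= K)%N ->
  (0 < f l)%N = has (odd \o f) (index_iota l K.+1).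
Proof.
move=> f_half fK lK; move: fK; rewrite -(subnKC lK); move: (K - l)%N => k {lK}.
elim: k l f_half => [|k IH] l f_half fK.
  rewrite addn0 in fK *; rewrite /index_iota subSnn /= orbF.
  by case: (f l) fK => [|[|]].
rewrite -addSnnS in fK *.
have -> : index_iota l (l.+1 + k).+1 = l :: index_iota l.+1 (l.+1 + k).+1.
  rewrite /index_iota (_ : (l.+1 + k).+1 - l = k.+2)%N; last by lia.
  by rewrite (_ : (l.+1 + k).+1 - l.+1 = k.+1)%N; last by lia.
rewrite /= -IH //; last first.
  by move=> j hj; apply: f_half; apply: ltnW.
rewrite f_half // half_gt0.
by case: (f l) => [|[|j]] //=; rewrite orbT.
Qed.

Lemma mem_bigcup_seq (T : finType) (r : seq nat) (F : nat -> {set T}) x :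
  (x \in \bigcup_(i <- r) F i) = has (fun i => x \in F i) r.
Proof. by elim: r => [|i r IH]; rewrite ?big_nil ?inE // big_cons in_setU IH. Qed.

Lemma imset_bigcup_fibres (T I : finType) (u : T -> I) (F : I -> {set T}) :
  (forall v i, i \in F v -> u i = v) ->
  u @: (\bigcup_v F v) = [set v | F v != set0].
Proof.
move=> hF; apply/setP => v; rewrite inE; apply/imsetP/set0Pn.
  by case=> i /bigcupP[w _ hi] ->; exists i; rewrite (hF w i hi).
by case=> i hi; exists i; [apply/bigcupP; exists v | rewrite (hF v i hi)].
Qed.

Lemma halve_sub_odd (R : numFieldType) (V : lmodType R) (I : finType)
    (k : I -> nat) (x : I -> V) (w : V) :
  2^-1 *: (\sum_i (k i)%:R *: x i + w - \sum_(i in [set i | odd (k i)]) x i)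
  = \sum_i ((k i)./2)%:R *: x i + 2^-1 *: w.
Proof.
rewrite addrAC scalerDr; congr (_ + _).
rewrite [X in _ - X]big_mkcond -sumrB scaler_sumr; apply: eq_bigr => i _ /=.
have -> : (if i \in [set i | odd (k i)] then x i else 0) = (odd (k i))%:R *: x i.
  by rewrite inE; case: odd; rewrite ?scale1r ?scale0r.
rewrite -scalerBl scalerA; congr (_ *: _).
by rewrite -{1}(odd_double_half (k i)) natrD -muln2 natrM; field.
Qed.

Lemma natr_F2 (k : nat) : (k%:R : 'F_2) = (odd k)%:R.
Proof. by rewrite -(@Fp_nat_mod 2) // modn2. Qed.

Lemma bitR_nat (R : realType) (b : 'F_2) : bitR R b = (b : nat)%:R.
Proof. by case: b => [[|[|]]]. Qed.

Lemma mod2_add_even (R : realType) (r : R) (N : nat) : mod2 (r + 2 * N%:R) = mod2 r.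
Proof.
rewrite /mod2 (_ : (r + 2 * N%:R) / 2 = r / 2 + N%:R); last by field.
by rewrite floorDrz ?natr_int // intrD (floorK (natr_int _ N)); ring.
Qed.

Lemma mod2_sum_bitR (R : realType) (I : finType) (m : I -> nat) (b : I -> 'F_2) (r : R) :
  mod2 (\sum_i (m i)%:R * bitR R (b i) + r) = mod2 (bitR R (\sum_i (m i)%:R * b i) + r).
Proof.
set N := (\sum_i m i * b i)%N.
have -> : \sum_i (m i)%:R * bitR R (b i) = N%:R.
  by rewrite natr_sum; apply: eq_bigr => i _; rewrite bitR_nat natrM.
have -> : \sum_i (m i)%:R * b i = N%:R.
  by rewrite natr_sum; apply: eq_bigr => i _; rewrite natrM natr_Zp.
rewrite bitR_nat (@val_Fp_nat 2) // {1}(divn_eq N 2) natrD natrM.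
by rewrite -addrA addrC (mulrC _ 2%:R) mod2_add_even.
Qed.

Lemma wt_gt0 (k : nat) (v : 'cV['F_2]_k) : v != 0 -> (0 < wt v)%N.
Proof.
move=> v_neq0; rewrite /wt card_gt0; apply: contraNneq v_neq0 => /setP empty.
apply/eqP/matrixP => i j; rewrite (ord1 j) mxE.
by have := empty i; rewrite !inE => /negbFE/eqP.
Qed.

Section SyndromeDecoding.
Variables (mp np d : nat) (H : 'M['F_2]_(mp, np)).
Hypothesis Hd : min_dist H d.
Local Notation T := ((d - 1)./2)%N.

Lemma mulmx_indicator (S : {set 'I_np}) :
  H *m \col_j (j \in S)%:R = \sum_(j in S) col j H.
Proof.
apply/matrixP => k l; rewrite !mxE summxE [RHS]big_mkcond /=; apply: eq_bigr => j _.
by rewrite !mxE; case: (j \in S); rewrite ?mulr1 ?mulr0 ?mxE.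
Qed.

Lemma sum_col_inj (S1 S2 : {set 'I_np}) : (#|S1| <= T)%N -> (#|S2| <= T)%N ->
  \sum_(j in S1) col j H = \sum_(j in S2) col j H -> S1 = S2.
Proof.
move=> S1_le S2_le eq_sum; apply/eqP; apply: contraT => S12_neq.
pose v : 'cV['F_2]_np := \col_j (j \in S1)%:R - \col_j (j \in S2)%:R.
have Hv0 : H *m v = 0 by rewrite mulmxBr !mulmx_indicator eq_sum subrr.
have v_neq0 : v != 0.
  apply: contraNneq S12_neq => /eqP; rewrite subr_eq0 => /eqP /matrixP eq_ind.
  apply/eqP/setP => j; have := eq_ind j 0; rewrite !mxE.
  by case: (j \in S1); case: (j \in S2).
have wt_le : (wt v <= #|S1| + #|S2|)%N.
  apply: leq_trans (leq_card_setU S1 S2); apply: subset_leq_card.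
  apply/subsetP => j; rewrite !inE !mxE.
  by case: (j \in S1); case: (j \in S2).
have := Hd.2 v v_neq0 Hv0; have := wt_gt0 v_neq0; have := odd_double_half (d - 1).
rewrite -muln2; lia.
Qed.

Lemma synd_dec_sum (S : {set 'I_np}) : (#|S| <= T)%N ->
  synd_dec H T (\sum_(j in S) col j H) = S.
Proof.
move=> S_le; rewrite /synd_dec; case: pickP => [S' /andP[S'_le /eqP eq_sum] | none] /=.
  exact: sum_col_inj.
by have := none S; rewrite S_le eqxx.
Qed.

End SyndromeDecoding.

Section CountSyndrome.
Variables (mp np : nat) (H : 'M['F_2]_(mp, np)).

Definition count_syndrome (m : 'I_np -> nat) : 'cV['F_2]_mp := \sum_v (m v)%:R *: col v H.

Lemma count_syndrome_odd (m : 'I_np -> nat) :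
  count_syndrome m = \sum_(v in [set v | odd (m v)]) col v H.
Proof.
rewrite /count_syndrome [RHS]big_mkcond; apply: eq_bigr => v _.
by rewrite natr_F2 inE; case: odd; rewrite ?scale1r ?scale0r.
Qed.

Lemma synd_dec_count_syndrome (d : nat) (m : 'I_np -> nat) : min_dist H d ->
  (\sum_v m v <= (d - 1)./2)%N ->
  synd_dec H ((d - 1)./2) (count_syndrome m) = [set v | odd (m v)].
Proof.
move=> Hd m_le; rewrite count_syndrome_odd synd_dec_sum // card_set_odd.
by apply: leq_trans m_le; apply: leq_sum => v _; apply: odd_leq.
Qed.

End CountSyndrome.

Section Phi.
Variables (R : realType) (mp np n : nat).
Variables (H : 'M['F_2]_(mp, np)) (G : 'M['F_2]_(mp, n)).
Variables (a : R) (D : 'rV[R]_n -> option 'rV['F_2]_n).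
Hypothesis a_neq0 : a != 0.

Lemma sum_cw_count_syndrome (m : 'I_np -> nat) :
  \sum_v (m v)%:R *: cw H G v = (count_syndrome H m)^T *m G.
Proof.
rewrite /count_syndrome linear_sum mulmx_suml; apply: eq_bigr => v _.
by rewrite linearZ scalemxAl.
Qed.

Lemma Phi_input_counts (m : 'I_np -> nat) (w : 'rV[R]_n) :
  Phi_input a (\sum_v (m v)%:R *: xsig H G a v + w) (\sum_v m v)
  = mod2v (binR R ((count_syndrome H m)^T *m G) + (2 * a)^-1 *: w).
Proof.
rewrite -sum_cw_count_syndrome; apply/matrixP => i j.
rewrite /Phi_input /mod2v /binR !mxE !summxE.
rewrite (eq_bigr (fun v => (m v)%:R * xsig H G a v i j)); last by move=> v _; rewrite mxE.
rewrite [in RHS](eq_bigr (fun v => (m v)%:R * cw H G v i j)); last by move=> v _; rewrite mxE.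
rewrite -mod2_sum_bitR; congr mod2.
rewrite mulrDr addrAC natr_sum mulr_sumr mulr_suml -big_split; congr (_ + _).
by apply: eq_bigr => v _; rewrite /xsig mxE /=; field.
Qed.

Lemma Phi_decoded (d : nat) (m : 'I_np -> nat) (y : 'rV[R]_n) (t : nat) :
  min_dist H d -> row_free G -> (\sum_v m v <= (d - 1)./2)%N ->
  D (Phi_input a y t) = Some ((count_syndrome H m)^T *m G) ->
  Phi H G a D ((d - 1)./2) y t = [set v | odd (m v)].
Proof.
move=> Hd HG m_le decoded.
by rewrite /Phi decoded mulmxKp // trmxK synd_dec_count_syndrome.
Qed.

End Phi.

Section ICRRun.
Variables (R : realType) (mp np n : nat).
Variables (H : 'M['F_2]_(mp, np)) (G : 'M['F_2]_(mp, n)).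
Variables (a : R) (D : 'rV[R]_n -> option 'rV['F_2]_n) (T : nat).
Variables (y0 : 'rV[R]_n) (t0 : nat).

Lemma icr_yS l : (1 <= l)%N ->
  icr_y H G a D T y0 t0 l.+1 =
  2^-1 *: (icr_y H G a D T y0 t0 l - \sum_(v in icr_L H G a D T y0 t0 l) xsig H G a v).
Proof. by case: l. Qed.

Lemma icr_tS l : (1 <= l)%N ->
  icr_t H G a D T y0 t0 l.+1 =
  ((icr_t H G a D T y0 t0 l - #|icr_L H G a D T y0 t0 l|)./2)%N.
Proof. by case: l. Qed.

End ICRRun.

Section ICRCounts.
Variables (R : realType) (mp np n d : nat).
Variables (H : 'M['F_2]_(mp, np)) (G : 'M['F_2]_(mp, n)).
Hypotheses (Hd : min_dist H d) (HG : row_free G).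
Variables (a : R) (D : 'rV[R]_n -> option 'rV['F_2]_n) (z : 'rV[R]_n).
Hypothesis a_neq0 : a != 0.
Variables (m : nat -> 'I_np -> nat) (tau : nat).
Hypothesis m_half : forall l v, (1 <= l)%N -> m l.+1 v = (m l v)./2.
Hypothesis m1_le : (\sum_v m 1 v <= (d - 1)./2)%N.

Local Notation T := ((d - 1)./2)%N.
Local Notation y0 := (\sum_v (m 1 v)%:R *: xsig H G a v + z).
Local Notation t0 := (\sum_v m 1 v)%N.
Local Notation Y := (icr_y H G a D T y0 t0).
Local Notation Tl := (icr_t H G a D T y0 t0).
Local Notation L := (icr_L H G a D T y0 t0).

Hypothesis no_E2 : forall l, (1 <= l <= tau)%N ->
  forall (c : 'rV['F_2]_n) (k : nat), (c <= G)%MS ->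
    Phi_input a (Y l) (Tl l) = mod2v (binR R c + (2 ^+ k)^-1 *: ((2 * a)^-1 *: z)) ->
    D (Phi_input a (Y l) (Tl l)) = Some c.

Lemma sum_m_leq l : (1 <= l)%N -> (\sum_v m l v <= T)%N.
Proof.
elim: l => // -[_ _ //|l IH] _; apply: leq_trans (IH isT).
by apply: leq_sum => v _; rewrite m_half // half_leq_self.
Qed.

Lemma icr_L_of_counts l : (1 <= l <= tau)%N ->
  Y l = \sum_v (m l v)%:R *: xsig H G a v + (2 ^+ l.-1)^-1 *: z ->
  Tl l = (\sum_v m l v)%N ->
  L l = [set v | odd (m l v)].
Proof.
move=> l_range Yl Tll; have /andP[l_ge1 _] := l_range.
apply: Phi_decoded Hd HG (sum_m_leq l_ge1) _.
apply: no_E2 l_range _ l.-1 (submxMl _ _) _.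
by rewrite Yl Tll Phi_input_counts // !scalerA mulrC.
Qed.

Lemma icr_counts l : (1 <= l <= tau)%N ->
  Y l = \sum_v (m l v)%:R *: xsig H G a v + (2 ^+ l.-1)^-1 *: z /\
  Tl l = (\sum_v m l v)%N.
Proof.
elim: l => // -[_ _|l IH /andP[_ l_lt]]; first by split => //=; rewrite expr0 invr1 scale1r.
have l_range : (1 <= l.+1 <= tau)%N by rewrite /= ltnW.
have [Yl Tll] := IH l_range.
rewrite icr_yS // icr_tS // (icr_L_of_counts l_range Yl Tll) Yl Tll.
rewrite halve_sub_odd scalerA -invfM -exprS card_set_odd half_subn_sum_odd.
split; last by apply: eq_bigr => v _; rewrite (@m_half l.+1).
by congr (_ + _); apply: eq_bigr => v _; rewrite (@m_half l.+1).
Qed.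

Lemma icr_L_odd l : (1 <= l <= tau)%N -> L l = [set v | odd (m l v)].
Proof. by move=> l_range; have [] := icr_counts l_range; apply: icr_L_of_counts. Qed.

Lemma icr_stops_m_leq1 : icr_stops H G a D T y0 t0 tau -> forall v, (m tau v <= 1)%N.
Proof.
case=> tau_ge1 _ L_tau; apply: sum_odd_eq_leq1.
have tau_range : (1 <= tau <= tau)%N by rewrite tau_ge1 leqnn.
by rewrite -card_set_odd -(icr_L_odd tau_range) L_tau (icr_counts tau_range).2.
Qed.

Lemma bigcup_icr_L l : icr_stops H G a D T y0 t0 tau -> (1 <= l <= tau)%N ->
  \bigcup_(l <= l' < tau.+1) L l' = [set v | 0 < m l v]%N.
Proof.
move=> stops /andP[l_ge1 l_le]; apply/setP => v; rewrite inE mem_bigcup_seq.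
rewrite (@halving_pos_has_odd (m^~ v) _ tau) ?icr_stops_m_leq1 //; last first.
  by move=> k l_k; apply: m_half (leq_trans l_ge1 l_k).
apply: eq_in_has => l'; rewrite mem_index_iota ltnS => l'_range.
by rewrite icr_L_odd ?inE //; case/andP: l'_range => /(leq_trans l_ge1) -> ->.
Qed.

End ICRCounts.

Section Splitting.
Variables (I User : finType) (A : {set User}) (u : User -> I).
Variables (Aell Bell : nat -> I -> {set User}).
Hypothesis HA1 : forall v, Aell 1%N v = [set i in A | u i == v].
Hypothesis HB : forall l v, (1 <= l)%N ->
  Bell l v \subset Aell l v /\ #|Bell l v| = (2 * (#|Aell l v| ./2))%N.
Hypothesis HA : forall l v, (1 <= l)%N ->
  Aell l.+1 v \subset Bell l v /\ #|Aell l.+1 v| = (#|Bell l v| ./2)%N.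

Lemma card_Aell_half l v : (1 <= l)%N -> #|Aell l.+1 v| = #|Aell l v|./2.
Proof. by move=> l_ge1; rewrite (HA v l_ge1).2 (HB v l_ge1).2 mul2n doubleK. Qed.

Lemma Aell_fibre l v i : (1 <= l)%N -> i \in Aell l v -> u i = v.
Proof.
move=> l_ge1; suff Aell_sub : Aell l v \subset Aell 1 v.
  by move=> /(subsetP Aell_sub); rewrite HA1 inE => /andP[_ /eqP].
elim: l l_ge1 => // -[_ _ //|l IH] _; apply: subset_trans _ (IH isT).
exact: subset_trans (@HA l.+1 v isT).1 (@HB l.+1 v isT).1.
Qed.

Lemma card_Aell1_sum : #|A| = (\sum_v #|Aell 1 v|)%N.
Proof.
rewrite -sum1_card (partition_big u predT) //=; apply: eq_bigr => v _.
by rewrite HA1 -sum1dep_card.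
Qed.

Lemma sum_Aell1 (V : nmodType) (f : I -> V) :
  \sum_(i in A) f (u i) = \sum_v f v *+ #|Aell 1 v|.
Proof.
rewrite (partition_big u predT) //=; apply: eq_bigr => v _.
rewrite (eq_bigr (fun _ => f v)); last by move=> i /andP[_ /eqP ->].
rewrite (eq_bigl (fun i => i \in Aell 1 v)); last by move=> i; rewrite HA1 inE.
exact: sumr_const.
Qed.

End Splitting.

Theorem corollary1 (R : realType) (mp np n : nat)
  (H : 'M['F_2]_(mp, np)) (d : nat) (Hd : min_dist H d)
  (G : 'M['F_2]_(mp, n)) (HG : row_free G)
  (a : R) (ha : 0 < a)
  (D : 'rV[R]_n -> option 'rV['F_2]_n)
  (HD : forall v c, D v = Some c -> (c <= G)%MS)
  (User : finType) (A : {set User}) (u : User -> 'I_np) (z : 'rV[R]_n)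
  (tau : nat)
  (Aell Bell : nat -> 'I_np -> {set User})
  (HA1 : forall v, Aell 1%N v = [set i in A | u i == v])
  (HB : forall l v, (1 <= l)%N ->
      Bell l v \subset Aell l v /\ #|Bell l v| = (2 * (#|Aell l v| ./2))%N)
  (HA : forall l v, (1 <= l)%N ->
      Aell l.+1 v \subset Bell l v /\ #|Aell l.+1 v| = (#|Bell l v| ./2)%N) :
  let T := ((d - 1) ./2)%N in
  let y := \sum_(i in A) xsig H G a (u i) + z in
  let ztil := (2 * a)^-1 *: z in
  (* no E_1 *)
  (#|A| <= T)%N ->
  (* the ICR run with estimate t_j = |A_j| terminates after tau iterations *)
  icr_stops H G a D T y #|A| tau ->
  (* no E_2 *)
  (forall l, (1 <= l <= tau)%N ->
     forall (c : 'rV['F_2]_n) (k : nat), (c <= G)%MS ->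
       Phi_input a (icr_y H G a D T y #|A| l) (icr_t H G a D T y #|A| l)
         = mod2v (binR R c + (2 ^+ k)^-1 *: ztil) ->
       D (Phi_input a (icr_y H G a D T y #|A| l) (icr_t H G a D T y #|A| l))
         = Some c) ->
  forall l, (1 <= l <= tau)%N ->
    u @: (\bigcup_(v : 'I_np) Aell l v)
      = \bigcup_(l <= l' < tau.+1) icr_L H G a D T y #|A| l'.
Proof.
move=> T y ztil A_le stops no_E2 l l_range.
have m_half := card_Aell_half HB HA.
have y_counts : y = \sum_v #|Aell 1 v|%:R *: xsig H G a v + z.
  by rewrite /y (sum_Aell1 HA1); congr (_ + _); apply: eq_bigr => v _; rewrite scaler_nat.
rewrite (card_Aell1_sum HA1) y_counts in A_le stops no_E2 *.
rewrite (bigcup_icr_L Hd HG (lt0r_neq0 ha) m_half A_le no_E2 stops l_range).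
have /andP[l_ge1 _] := l_range.
rewrite imset_bigcup_fibres => [|v i]; first by apply/setP => v; rewrite !inE card_gt0.
exact: (Aell_fibre HA1 HB HA l_ge1).
Qed.
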